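(* Let $T:\mathbb{R}^{M}\times\cdots\times\mathbb{R}^{M}\to\mathbb{R}^D$ ($N$ factors) be a real $N$-linear map with coefficients $T_{i,s}$, $i\in\{1,\dots,D\}$, $s\in\{1,\dots,M\}^N$, which is norm-preserving: $\big\|T(a^{(1)},\dots,a^{(N)})\big\|=\prod_{k=1}^N\|a^{(k)}\|$ for all $a^{(k)}\in\mathbb{R}^M$, where $T(a^{(1)},\dots,a^{(N)})_i=\sum_s T_{i,s}\prod_k a^{(k)}_{s_k}$ and $\|\cdot\|$ is the Euclidean norm. Let $\rho$ be a density operator on $\mathcal{H}_1\otimes\cdots\otimes\mathcal{H}_N$ which has positive partial transpose with respect to all bipartitions, i.e. $\rho^{T_\tau}\ge 0$ for every subset $\tau\subseteq\{1,\dots,N\}$. Then for all Hermitian operators $A^{(k)}_j$ on $\mathcal{H}_k$ ($k=1,\dots,N$, $j=1,\dots,M$), $$\sum_{i=1}^D\Big(\sum_{s}T_{i,s}\,\mathrm{tr}\big[\rho\,A^{(1)}_{s_1}\otimes\cdots\otimes A^{(N)}_{s_N}\big]\Big)^2\le\sum_{s}\mathrm{tr}\big[\rho\,(A^{(1)}_{s_1})^2\otimes\cdots\otimes(A^{(N)}_{s_N})^2\big].$$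
   Context: $\mathcal{H}_1,\dots,\mathcal{H}_N$ are finite-dimensional complex Hilbert spaces, each with a fixed orthonormal basis; for $\tau\subseteq\{1,\dots,N\}$, $\rho^{T_\tau}$ denotes the partial transpose of $\rho$ with respect to the tensor factors in $\tau$ (in these bases). A density operator is a positive semidefinite operator of trace one. *)

From HB Require Import structures.
From mathcomp Require Import all_boot all_order all_algebra.
From mathcomp Require Import reals.
From mathcomp Require Import complex.
Set Implicit Arguments. Unset Strict Implicit. Unset Printing Implicit Defensive.
Import Order.TTheory GRing.Theory Num.Theory.
Local Open Scope ring_scope.
Local Open Scope complex_scope.

Section QuantumDefs.
Variable R : realType.
Local Notation C := R[i].

(* Multi-index type for a basis of H_1 (x) ... (x) H_N, dim H_k = d k. *)
Definition mindex (N : nat) (d : 'I_N -> nat) : finType :=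
  {dffun forall k : 'I_N, 'I_(d k)}.

(* Operators on the tensor product, as matrices in the product basis. *)
Definition top (N : nat) (d : 'I_N -> nat) := mindex d -> mindex d -> C.

Definition tensor (N : nat) (d : 'I_N -> nat)
  (A : forall k : 'I_N, 'M[C]_(d k)) : top d :=
  fun x y => \prod_(k < N) A k (x k) (y k).

Definition trace_prod (N : nat) (d : 'I_N -> nat) (X Y : top d) : C :=
  \sum_(x : mindex d) \sum_(y : mindex d) X x y * Y y x.

Definition trace_op (N : nat) (d : 'I_N -> nat) (X : top d) : C :=
  \sum_(x : mindex d) X x x.

Definition ptranspose (N : nat) (d : 'I_N -> nat) (tau : {set 'I_N})
  (X : top d) : top d :=
  fun x y =>
    X (finfun (fun k => if k \in tau then y k else x k) : mindex d)
      (finfun (fun k => if k \in tau then x k else y k) : mindex d).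

(* Positive semidefinite: <v, X v> >= 0 for all v (order of the complex
   numbers: 0 <= z means z is real and nonnegative). *)
Definition psd (N : nat) (d : 'I_N -> nat) (X : top d) : Prop :=
  forall v : mindex d -> C,
    0 <= \sum_(x : mindex d) \sum_(y : mindex d) (v x)^* * X x y * v y.

Definition density (N : nat) (d : 'I_N -> nat) (rho : top d) : Prop :=
  psd rho /\ trace_op rho = 1.

Definition herm_op (n : nat) (A : 'M[C]_n) : Prop :=
  forall i j, A i j = (A j i)^*.

End QuantumDefs.

Definition mlmap_apply (R : realType) (N M D : nat)
  (T : 'I_D -> {ffun 'I_N -> 'I_M} -> R) (a : 'I_N -> 'I_M -> R) (i : 'I_D) : R :=
  \sum_(s : {ffun 'I_N -> 'I_M}) T i s * \prod_(k < N) a k (s k).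

Definition enorm (R : realType) (n : nat) (v : 'I_n -> R) : R :=
  Num.sqrt (\sum_(j < n) v j ^+ 2).

Definition norm_preserving (R : realType) (N M D : nat)
  (T : 'I_D -> {ffun 'I_N -> 'I_M} -> R) : Prop :=
  forall a : 'I_N -> 'I_M -> R,
    enorm (mlmap_apply T a) = \prod_(k < N) enorm (a k).

From HB Require Import structures.
From mathcomp Require Import all_boot all_order all_algebra.
From mathcomp Require Import reals.
From mathcomp Require Import complex.
From mathcomp Require Import ring.
Import Order.TTheory GRing.Theory Num.Theory.
Local Open Scope ring_scope.
Local Open Scope complex_scope.
Set Implicit Arguments. Unset Strict Implicit. Unset Printing Implicit Defensive.

(* For a subset tau of the parties, the observable X = sum_s T_(i,s) A_(s_1) (x) ... (x) A_(s_N)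
   satisfies tr[rho X] = tr[rho^(T_tau) X^(T_tau)], and rho^(T_tau) is again a density
   operator, so nonnegativity of the variance bounds tr[rho X]^2 by
   tr[rho^(T_tau) (X^(T_tau))^2] = sum_(s,t) T_(i,s) T_(i,t) tr[rho (x)_k P_k], where P_k is
   A_(s_k) A_(t_k) for k outside tau and A_(t_k) A_(s_k) inside.  Summing over all 2^N
   subsets turns the P_k into anticommutators, and summing over i brings in the Gram
   matrix G_(s,t) = sum_i T_(i,s) T_(i,t).  Norm preservation says
   sum_(s,t) G_(s,t) prod_k r_k(s_k) r_k(t_k) = sum_s prod_k r_k(s_k)^2 for real vectors r_k;
   by multilinearity and polarization the same identity holds with r_k r_k^T replaced by
   any symmetric B_k, and for B_k the anticommutators it gives 2^N times the right-hand
   side. *)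


Lemma bigA_distr_dffun (R : comPzSemiRingType) (I : finType) (T_ : I -> finType)
    (F : forall i, T_ i -> R) :
  \prod_i \sum_(j : T_ i) F i j = \sum_(x : {dffun forall i : I, T_ i}) \prod_i F i (x i).
Proof.
pose P_ i := [ffun j : T_ i => F i j].
transitivity (\prod_i \sum_(j in tagged_with T_ i) untag 0 (P_ i) j).
  apply: eq_bigr => i _; rewrite -(big_tag (fun i => fun_of_fin (P_ i)) i).
  by apply: eq_bigr => j _; rewrite ffunE.
rewrite bigA_distr_big_dep -big_fprod.
rewrite (reindex (@fprod_of_dffun _ T_)); last first.
  by exists (@dffun_of_fprod _ _) => x _; [exact: fprod_of_dffunK | exact: dffun_of_fprodK].
by apply: eq_bigr => x _; apply: eq_bigr => i _; rewrite ffunE fprodE.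
Qed.

Lemma bigA_distr_set (R : comPzSemiRingType) (I : finType) (a b : I -> R) :
  \prod_i (a i + b i) = \sum_(S : {set I}) \prod_i (if i \in S then a i else b i).
Proof.
transitivity (\prod_i \sum_(e : bool) (if e then a i else b i)).
  by apply: eq_bigr => i _; rewrite big_bool.
rewrite bigA_distr_bigA (reindex (fun S : {set I} => [ffun i => i \in S])) /=; last first.
  exists (fun f : {ffun I -> bool} => [set i | f i]) => [S _ | f _].
    by apply/setP => i; rewrite inE ffunE.
  by apply/ffunP => i; rewrite ffunE inE.
by apply: eq_bigr => S _; apply: eq_bigr => i _; rewrite ffunE.
Qed.

Lemma sum_mul_delta (R : pzSemiRingType) (I : finType) (F : I -> R) (a : I) :
  \sum_i F i * (a == i)%:R = F a.
Proof.
rewrite (bigD1 a) //= eqxx mulr1 big1 ?addr0 // => i /negbTE.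
by rewrite eq_sym => ->; rewrite mulr0.
Qed.

Section Operators.
Variables (R : realType) (N : nat) (d : 'I_N -> nat).
Local Notation C := R[i].
Local Notation MI := (mindex d).
Local Notation top := (top R d).

Definition top_mul (X Y : top) : top := fun x y => \sum_(z : MI) X x z * Y z y.

Definition lincomb (P : finType) (c : P -> C) (X : P -> top) : top :=
  fun x y => \sum_p c p * X p x y.

Definition hermitian (X : top) : Prop := forall x y, X x y = (X y x)^*.

Lemma eq_trace_prod (X Y Y' : top) :
  (forall x y, Y x y = Y' x y) -> trace_prod X Y = trace_prod X Y'.
Proof. by move=> eY; apply: eq_bigr => x _; apply: eq_bigr => y _; rewrite eY. Qed.

Lemma trace_prod_sum (P : finType) (X : top) (Y : P -> top) :
  trace_prod X (fun x y => \sum_p Y p x y) = \sum_p trace_prod X (Y p).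
Proof.
rewrite /trace_prod.
under eq_bigr => x _ do under eq_bigr => y _ do rewrite mulr_sumr.
under eq_bigr => x _ do rewrite exchange_big.
by rewrite exchange_big.
Qed.

Lemma trace_prod_lincomb (P : finType) (c : P -> C) (X : top) (Y : P -> top) :
  trace_prod X (lincomb c Y) = \sum_p c p * trace_prod X (Y p).
Proof.
rewrite trace_prod_sum; apply: eq_bigr => p _; rewrite /trace_prod mulr_sumr.
by apply: eq_bigr => x _; rewrite mulr_sumr; apply: eq_bigr => y _; rewrite mulrCA.
Qed.

Lemma top_mul_lincomb (P Q : finType) (a : P -> C) (b : Q -> C)
    (X : P -> top) (Y : Q -> top) x y :
  top_mul (lincomb a X) (lincomb b Y) x y
  = lincomb (fun pq : P * Q => a pq.1 * b pq.2)
            (fun pq => top_mul (X pq.1) (Y pq.2)) x y.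
Proof.
rewrite /top_mul /lincomb.
rewrite -(pair_bigA _ (fun p q => a p * b q * \sum_z X p x z * Y q z y)) /=.
under eq_bigr => z _ do rewrite big_distrlr /=.
rewrite exchange_big; apply: eq_bigr => p _; rewrite exchange_big.
apply: eq_bigr => q _; rewrite mulr_sumr; apply: eq_bigr => z _.
by rewrite mulrACA.
Qed.

Lemma tensor_mul (A B : forall k : 'I_N, 'M[C]_(d k)) x y :
  top_mul (tensor A) (tensor B) x y = tensor (fun k => A k *m B k) x y.
Proof.
rewrite /top_mul /tensor.
under [RHS]eq_bigr => k _ do rewrite mxE.
rewrite bigA_distr_dffun; apply: eq_bigr => z _.
by rewrite -big_split.
Qed.

Lemma hermitian_lincomb (P : finType) (c : P -> R) (X : P -> top) :
  (forall p, hermitian (X p)) -> hermitian (lincomb (fun p => (c p)%:C) X).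
Proof.
move=> hX x y; rewrite rmorph_sum; apply: eq_bigr => p _.
by rewrite rmorphM /= -hX oppr0.
Qed.

Lemma hermitian_tensor (A : forall k : 'I_N, 'M[C]_(d k)) :
  (forall k, herm_op (A k)) -> hermitian (tensor A).
Proof.
by move=> hA x y; rewrite rmorph_prod; apply: eq_bigr => k _; rewrite hA.
Qed.

Section PartialTranspose.
Variable tau : {set 'I_N}.

Definition swap_on (x y : MI) : MI := [ffun k => if k \in tau then y k else x k].

Lemma swap_onE x y k : swap_on x y k = if k \in tau then y k else x k.
Proof. exact: (ffunE _ k). Qed.

Lemma swap_onK x y : swap_on (swap_on x y) (swap_on y x) = x.
Proof. by apply/ffunP => k; rewrite !swap_onE; case: (k \in tau). Qed.

Lemma swap_onxx x : swap_on x x = x.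
Proof. by apply/ffunP => k; rewrite swap_onE; case: (k \in tau). Qed.

Lemma ptransposeE (X : top) x y : ptranspose tau X x y = X (swap_on x y) (swap_on y x).
Proof. by []. Qed.

Lemma sum_swap_on (F : MI -> MI -> C) :
  \sum_x \sum_y F (swap_on x y) (swap_on y x) = \sum_x \sum_y F x y.
Proof.
rewrite !pair_bigA.
pose h (p : MI * MI) := (swap_on p.1 p.2, swap_on p.2 p.1).
have hK : involutive h by move=> [x y]; rewrite /h /= !swap_onK.
by rewrite [RHS](reindex_inj (inv_inj hK)).
Qed.

Lemma trace_op_ptranspose (X : top) : trace_op (ptranspose tau X) = trace_op X.
Proof. by apply: eq_bigr => x _; rewrite ptransposeE swap_onxx. Qed.

Lemma trace_prod_ptranspose (X Y : top) :
  trace_prod (ptranspose tau X) (ptranspose tau Y) = trace_prod X Y.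
Proof. exact: (sum_swap_on (fun x y => X x y * Y y x)). Qed.

Lemma ptranspose_lincomb (P : finType) (c : P -> C) (X : P -> top) :
  ptranspose tau (lincomb c X) = lincomb c (fun p => ptranspose tau (X p)).
Proof. by []. Qed.

Lemma ptranspose_tensor (A : forall k : 'I_N, 'M[C]_(d k)) x y :
  ptranspose tau (tensor A) x y
  = tensor (fun k => if k \in tau then (A k)^T else A k) x y.
Proof.
apply: eq_bigr => k _; rewrite !swap_onE.
by case: (k \in tau); rewrite ?mxE.
Qed.

Lemma hermitian_ptranspose (X : top) : hermitian X -> hermitian (ptranspose tau X).
Proof. by move=> hX x y; rewrite !ptransposeE hX. Qed.

End PartialTranspose.

Lemma tensor_add_expand (A B : forall k : 'I_N, 'M[C]_(d k)) x y :
  tensor (fun k => A k + B k) x y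
  = \sum_(S : {set 'I_N}) tensor (fun k => if k \in S then A k else B k) x y.
Proof.
rewrite /tensor; under eq_bigr => k _ do rewrite mxE.
by rewrite bigA_distr_set; apply: eq_bigr => S _; apply: eq_bigr => k _; case: (k \in S).
Qed.

Lemma psd_trace_prod_sqr_le (sg Y : top) :
  psd sg -> trace_op sg = 1 -> hermitian Y ->
  trace_prod sg Y ^+ 2 <= trace_prod sg (top_mul Y Y).
Proof.
move=> psd_sg tr_sg hY; set t := trace_prod sg Y.
(* Positivity of [sg] on the rows of [Y - t]; no realness of [t] is needed, the
   cross terms combine to [t ^+ 2] exactly. *)
pose W z x := Y z x - t * (z == x)%:R.
have W_ge0 z : 0 <= \sum_x \sum_y W z x * sg x y * (W z y)^*.
  suff -> : \sum_x \sum_y W z x * sg x y * (W z y)^*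
          = \sum_x \sum_y ((W z x)^*)^* * sg x y * (W z y)^* by exact: psd_sg.
  by apply: eq_bigr => x _; apply: eq_bigr => y _; rewrite conjCK.
have expand z x y : W z x * sg x y * (W z y)^*
    = Y z x * sg x y * Y y z - t^* * (Y z x * sg x y * (z == y)%:R)
      - t * (sg x y * Y y z * (z == x)%:R) + t * t^* * (sg x y * (z == x)%:R * (z == y)%:R).
  by rewrite /W (hY y z) rmorphB rmorphM rmorph_nat; ring.
have : 0 <= \sum_z \sum_x \sum_y W z x * sg x y * (W z y)^*.
  by apply: sumr_ge0 => z _; exact: W_ge0.
under eq_bigr => z _ do under eq_bigr => x _ do under eq_bigr => y _ do rewrite expand.
under eq_bigr => z _ do under eq_bigr => x _ do rewrite big_split sumrB sumrB /=.
under eq_bigr => z _ do rewrite big_split sumrB sumrB /=.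
rewrite big_split sumrB sumrB /=.
have first_term : \sum_z \sum_x \sum_y Y z x * sg x y * Y y z = trace_prod sg (top_mul Y Y).
  rewrite /trace_prod /top_mul exchange_big /=; apply: eq_bigr => x _.
  rewrite exchange_big /=; apply: eq_bigr => y _; rewrite mulr_sumr.
  by apply: eq_bigr => z _; rewrite mulrC [Y z x * _]mulrC mulrCA.
have second_term : \sum_z \sum_x \sum_y t^* * (Y z x * sg x y * (z == y)%:R) = t^* * t.
  under eq_bigr => z _ do under eq_bigr => x _ do rewrite -mulr_sumr sum_mul_delta.
  under eq_bigr => z _ do rewrite -mulr_sumr.
  rewrite -mulr_sumr exchange_big; congr (_ * _); apply: eq_bigr => x _.
  by apply: eq_bigr => z _; rewrite mulrC.
have third_term : \sum_z \sum_x \sum_y t * (sg x y * Y y z * (z == x)%:R) = t * t.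
  under eq_bigr => z _ do under eq_bigr => x _ do rewrite -mulr_sumr -mulr_suml.
  by under eq_bigr => z _ do rewrite -mulr_sumr sum_mul_delta; rewrite -mulr_sumr.
have fourth_term : \sum_z \sum_x \sum_y t * t^* * (sg x y * (z == x)%:R * (z == y)%:R)
    = t * t^*.
  under eq_bigr => z _ do under eq_bigr => x _ do rewrite -mulr_sumr sum_mul_delta.
  under eq_bigr => z _ do rewrite -mulr_sumr sum_mul_delta.
  by rewrite -mulr_sumr -[RHS]mulr1 -tr_sg.
rewrite first_term second_term third_term fourth_term.
set Q := trace_prod sg (top_mul Y Y).
suff -> : Q - t^* * t - t * t + t * t^* = Q - t ^+ 2 by rewrite subr_ge0.
by rewrite expr2; ring.
Qed.

End Operators.

Section PolarDecomposition.
Variables (R : realType) (M : nat).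
Local Notation C := R[i].

Definition polar_sign (e : bool) : R := if e then 1 else -1.

Definition polar_vec (p : 'I_M * 'I_M * bool) (a : 'I_M) : R :=
  (a == p.1.1)%:R + polar_sign p.2 * (a == p.1.2)%:R.

Definition polar_coef (B : 'I_M -> 'I_M -> C) (p : 'I_M * 'I_M * bool) : C :=
  B p.1.1 p.1.2 / 4%:R * (polar_sign p.2)%:C.

(* [e_i e_j^T + e_j e_i^T = ((e_i + e_j)(e_i + e_j)^T - (e_i - e_j)(e_i - e_j)^T) / 2] *)
Lemma sym_polar_decomp (B : 'I_M -> 'I_M -> C) :
  (forall a b, B a b = B b a) ->
  forall a b, B a b = \sum_p polar_coef B p * (polar_vec p a * polar_vec p b)%:C.
Proof.
move=> hB a b.
pose term p := polar_coef B p * (polar_vec p a * polar_vec p b)%:C.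
transitivity (\sum_i \sum_j \sum_(e : bool) term (i, j, e)); last first.
  by rewrite pair_bigA pair_bigA; apply: eq_bigr => -[[i j] e].
have pair_sum i j : \sum_(e : bool) term (i, j, e)
    = B i j / 2%:R * (a == i)%:R * (b == j)%:R + B j i / 2%:R * (b == i)%:R * (a == j)%:R.
  rewrite big_bool /term /polar_coef /polar_vec /polar_sign /= -(hB i j).
  rewrite !rmorphM /= !rmorphD /= !rmorphM /= !rmorphN !rmorph_nat !rmorph1.
  by field.
symmetry; under eq_bigr => i _ do under eq_bigr => j _ do rewrite pair_sum.
under eq_bigr => i _ do rewrite big_split /= !sum_mul_delta.
by rewrite big_split /= !sum_mul_delta; field.
Qed.

End PolarDecomposition.

Arguments polar_vec {R M} p a.

Section Gram.
Variables (R : realType) (N M D : nat) (T : 'I_D -> {ffun 'I_N -> 'I_M} -> R).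
Hypothesis hT : norm_preserving T.
Local Notation C := R[i].
Local Notation sf := {ffun 'I_N -> 'I_M}.

Definition gram (s t : sf) : R := \sum_(i < D) T i s * T i t.

Lemma gram_rank_one (r : 'I_N -> 'I_M -> R) :
  \sum_(s : sf) \sum_(t : sf) gram s t * \prod_k (r k (s k) * r k (t k))
  = \sum_(s : sf) \prod_k (r k (s k) * r k (s k)).
Proof.
have sqr_enorm n (v : 'I_n -> R) : enorm v ^+ 2 = \sum_j v j ^+ 2.
  by rewrite sqr_sqrtr // sumr_ge0 // => j _; exact: sqr_ge0.
have := congr1 (fun x => x ^+ 2) (hT r).
rewrite /= sqr_enorm -prodrXl.
under [in RHS]eq_bigr => k _ do rewrite sqr_enorm.
rewrite bigA_distr_bigA /= => norm_sq.
transitivity (\sum_(s : sf) \prod_k r k (s k) ^+ 2); last first.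
  by apply: eq_bigr => s _; apply: eq_bigr => k _; rewrite expr2.
rewrite -norm_sq /mlmap_apply /gram.
under eq_bigr => s _ do under eq_bigr => t _ do rewrite mulr_suml.
under eq_bigr => s _ do rewrite exchange_big /=.
rewrite exchange_big /=; apply: eq_bigr => i _.
rewrite expr2 big_distrlr /=; apply: eq_bigr => s _; apply: eq_bigr => t _.
by rewrite big_split /= mulrACA.
Qed.

Lemma sum_coef_mul_gram (F : sf -> sf -> C) :
  \sum_(i < D) \sum_(s : sf) \sum_(t : sf) (T i s * T i t)%:C * F s t
  = \sum_(s : sf) \sum_(t : sf) (gram s t)%:C * F s t.
Proof.
rewrite exchange_big; apply: eq_bigr => s _; rewrite exchange_big; apply: eq_bigr => t _.
by rewrite /gram rmorph_sum mulr_suml.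
Qed.

Definition gram_defect (B : 'I_N -> 'I_M -> 'I_M -> C) : C :=
  \sum_(s : sf) \sum_(t : sf) (gram s t)%:C * \prod_k B k (s k) (t k)
  - \sum_(s : sf) \prod_k B k (s k) (s k).

Lemma eq_gram_defect B B' :
  (forall k a b, B k a b = B' k a b) -> gram_defect B = gram_defect B'.
Proof.
move=> eB; rewrite /gram_defect; congr (_ - _).
  apply: eq_bigr => s _; apply: eq_bigr => t _; congr (_ * _).
  by apply: eq_bigr => k _; rewrite eB.
by apply: eq_bigr => s _; apply: eq_bigr => k _; rewrite eB.
Qed.

Lemma gram_defect_rank_one (r : 'I_N -> 'I_M -> R) :
  gram_defect (fun k a b => (r k a * r k b)%:C) = 0.
Proof.
apply/eqP; rewrite subr_eq0; apply/eqP.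
transitivity ((\sum_(s : sf) \sum_(t : sf) gram s t * \prod_k (r k (s k) * r k (t k)))%:C).
  rewrite rmorph_sum; apply: eq_bigr => s _; rewrite rmorph_sum; apply: eq_bigr => t _.
  by rewrite rmorphM rmorph_prod.
by rewrite gram_rank_one rmorph_sum; apply: eq_bigr => s _; rewrite rmorph_prod.
Qed.

Definition update_factor (B : 'I_N -> 'I_M -> 'I_M -> C) (k0 : 'I_N)
    (B0 : 'I_M -> 'I_M -> C) : 'I_N -> 'I_M -> 'I_M -> C :=
  fun k => if k == k0 then B0 else B k.

Lemma gram_defect_lincomb (P : finType) B k0 (c : P -> C) (B_ : P -> 'I_M -> 'I_M -> C) :
  (forall a b, B k0 a b = \sum_p c p * B_ p a b) ->
  gram_defect B = \sum_p c p * gram_defect (update_factor B k0 (B_ p)).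
Proof.
move=> hB.
have prod_expand (s t : sf) : \prod_k B k (s k) (t k)
    = \sum_p c p * \prod_k update_factor B k0 (B_ p) k (s k) (t k).
  rewrite (bigD1 k0) //= hB mulr_suml; apply: eq_bigr => p _.
  rewrite [in RHS](bigD1 k0) //= /update_factor eqxx -mulrA; congr (_ * (_ * _)).
  by apply: eq_bigr => k /negbTE ->.
rewrite /gram_defect; symmetry.
under eq_bigr => p _ do rewrite mulrBr !mulr_sumr.
rewrite sumrB; congr (_ - _).
  rewrite exchange_big; apply: eq_bigr => s _.
  under eq_bigr => p _ do rewrite mulr_sumr.
  rewrite exchange_big; apply: eq_bigr => t _.
  by rewrite prod_expand mulr_sumr; apply: eq_bigr => p _; rewrite mulrCA.
by rewrite exchange_big; apply: eq_bigr => s _; rewrite prod_expand.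
Qed.

Lemma gram_defect_sym_prefix (n : nat) : (n <= N)%N ->
  forall (B : 'I_N -> 'I_M -> 'I_M -> C) (r : 'I_N -> 'I_M -> R),
  (forall k : 'I_N, (k < n)%N -> forall a b, B k a b = B k b a) ->
  (forall k : 'I_N, (n <= k)%N -> forall a b, B k a b = (r k a * r k b)%:C) ->
  gram_defect B = 0.
Proof.
elim: n => [_ B r _ B_rank_one | n IH lt_nN B r B_sym B_rank_one].
  rewrite -(gram_defect_rank_one r); apply: eq_gram_defect => k a b.
  exact: B_rank_one.
pose k0 := Ordinal lt_nN.
rewrite (gram_defect_lincomb (sym_polar_decomp (B_sym k0 (ltnSn n)))).
rewrite big1 // => p _.
rewrite (IH (ltnW lt_nN) _ (fun k => if k == k0 then polar_vec p else r k)) ?mulr0 //.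
  move=> k lt_kn a b; rewrite /update_factor.
  have -> : (k == k0) = false by apply/negbTE; apply: contraTneq lt_kn => ->; rewrite ltnn.
  by apply: B_sym; rewrite ltnS ltnW.
move=> k le_nk a b; rewrite /update_factor; case: eqP => // /eqP ne_kk0.
apply: B_rank_one; rewrite ltn_neqAle le_nk andbT.
by apply: contra ne_kk0 => /eqP e; apply/eqP/val_inj.
Qed.

Lemma gram_sum_sym (B : 'I_N -> 'I_M -> 'I_M -> C) :
  (forall k a b, B k a b = B k b a) ->
  \sum_(s : sf) \sum_(t : sf) (gram s t)%:C * \prod_k B k (s k) (t k)
  = \sum_(s : sf) \prod_k B k (s k) (s k).
Proof.
move=> B_sym; apply/eqP; rewrite -subr_eq0; apply/eqP.
apply: (gram_defect_sym_prefix (leqnn N) (r := fun _ _ => 0)) => [k _|k].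
  exact: B_sym.
by rewrite leqNgt ltn_ord.
Qed.

End Gram.

Section PPTBound.
Variables (R : realType) (N M : nat) (d : 'I_N -> nat).
Variable A : forall k : 'I_N, 'I_M -> 'M[R[i]]_(d k).
Hypothesis hA : forall k j, herm_op (A k j).
Local Notation sf := {ffun 'I_N -> 'I_M}.

Definition observable (c : sf -> R) : top R d :=
  lincomb (fun s => (c s)%:C) (fun s => tensor (fun k => A k (s k))).

Definition ordered_mul (tau : {set 'I_N}) (s t : sf) (k : 'I_N) : 'M[R[i]]_(d k) :=
  if k \in tau then A k (t k) *m A k (s k) else A k (s k) *m A k (t k).

Lemma ptranspose_observable_sqr tau (c : sf -> R) x y :
  top_mul (ptranspose tau (observable c)) (ptranspose tau (observable c)) x y
  = lincomb (fun st : sf * sf => (c st.1 * c st.2)%:C)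
      (fun st => ptranspose tau (tensor (ordered_mul tau st.1 st.2))) x y.
Proof.
rewrite !ptranspose_lincomb top_mul_lincomb; apply: eq_bigr => -[s t] _ /=.
rewrite rmorphM; congr (_ * _).
transitivity (top_mul (tensor (fun k => if k \in tau then (A k (s k))^T else A k (s k)))
                      (tensor (fun k => if k \in tau then (A k (t k))^T else A k (t k))) x y).
  by apply: eq_bigr => z _; rewrite !ptranspose_tensor.
rewrite tensor_mul ptranspose_tensor; apply: eq_bigr => k _.
by rewrite /ordered_mul; case: (k \in tau); rewrite // trmx_mul.
Qed.

Lemma ppt_sqr_bound (rho : top R d) tau (c : sf -> R) :
  density rho -> psd (ptranspose tau rho) ->
  (\sum_s (c s)%:C * trace_prod rho (tensor (fun k => A k (s k)))) ^+ 2
  <= \sum_s \sum_t (c s * c t)%:C * trace_prod rho (tensor (ordered_mul tau s t)).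
Proof.
move=> [_ tr_rho] psd_pt.
rewrite -trace_prod_lincomb -(trace_prod_ptranspose tau).
apply: le_trans (psd_trace_prod_sqr_le psd_pt _ _) _.
- by rewrite trace_op_ptranspose.
- by apply/hermitian_ptranspose/hermitian_lincomb => s; exact/hermitian_tensor.
rewrite (eq_trace_prod _ (ptranspose_observable_sqr tau c)) trace_prod_lincomb.
rewrite -(pair_bigA _ (fun s t => (c s * c t)%:C
   * trace_prod (ptranspose tau rho) (ptranspose tau (tensor (ordered_mul tau s t))))).
by under eq_bigr => s _ do under eq_bigr => t _ do rewrite trace_prod_ptranspose.
Qed.

Lemma sum_trace_ordered_mul (rho : top R d) (s t : sf) :
  \sum_(tau : {set 'I_N}) trace_prod rho (tensor (ordered_mul tau s t))
  = trace_prod rho (tensor (fun k => A k (t k) *m A k (s k) + A k (s k) *m A k (t k))).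
Proof. by rewrite (eq_trace_prod _ (tensor_add_expand _ _)) trace_prod_sum. Qed.

End PPTBound.

Section Conclusion.
Variables (R : realType) (N M D : nat) (d : 'I_N -> nat).
Variable T : 'I_D -> {ffun 'I_N -> 'I_M} -> R.
Hypothesis hT : norm_preserving T.
Local Notation sf := {ffun 'I_N -> 'I_M}.

Lemma gram_trace_tensor_sym (rho : top R d)
    (B : forall k : 'I_N, 'I_M -> 'I_M -> 'M[R[i]]_(d k)) :
  (forall k a b, B k a b = B k b a) ->
  \sum_(s : sf) \sum_(t : sf) (gram T s t)%:C * trace_prod rho (tensor (fun k => B k (s k) (t k)))
  = \sum_(s : sf) trace_prod rho (tensor (fun k => B k (s k) (s k))).
Proof.
move=> B_sym.
under eq_bigr => s _ do rewrite -trace_prod_lincomb.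
rewrite -!trace_prod_sum; apply: eq_trace_prod => x y.
apply: (gram_sum_sym hT (B := fun k a b => B k a b (x k) (y k))) => k a b.
by rewrite B_sym.
Qed.

Variable A : forall k : 'I_N, 'I_M -> 'M[R[i]]_(d k).

Lemma sum_ordered_mul_gram (rho : top R d) :
  \sum_(tau : {set 'I_N}) \sum_(i < D) \sum_(s : sf) \sum_(t : sf)
     (T i s * T i t)%:C * trace_prod rho (tensor (ordered_mul A tau s t))
  = \sum_(tau : {set 'I_N}) \sum_(s : sf) trace_prod rho (tensor (fun k => A k (s k) *m A k (s k))).
Proof.
under eq_bigr => tau _ do rewrite sum_coef_mul_gram.
under eq_bigr => tau _ do under eq_bigr => s _ do under eq_bigr => t _ do rewrite mulrC.
rewrite exchange_big /=; under eq_bigr => s _ do rewrite exchange_big /=.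
under eq_bigr => s _ do under eq_bigr => t _ do rewrite -mulr_suml sum_trace_ordered_mul mulrC.
rewrite (gram_trace_tensor_sym rho (B := fun k a b => A k b *m A k a + A k a *m A k b))
  => [|k a b]; last exact: addrC.
rewrite [RHS]exchange_big /=; apply: eq_bigr => s _.
rewrite (eq_trace_prod _ (tensor_add_expand _ _)) trace_prod_sum.
by apply: eq_bigr => S _; apply: eq_trace_prod => x y; apply: eq_bigr => k _; rewrite if_same.
Qed.

End Conclusion.

Theorem proposition2 (R : realType) (N M D : nat) (d : 'I_N -> nat)
  (T : 'I_D -> {ffun 'I_N -> 'I_M} -> R)
  (hT : norm_preserving T)
  (rho : top R d)
  (hrho : density rho)
  (hppt : forall tau : {set 'I_N}, psd (ptranspose tau rho))
  (A : forall k : 'I_N, 'I_M -> 'M[R[i]]_(d k))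
  (hA : forall (k : 'I_N) (j : 'I_M), herm_op (A k j)) :
  \sum_(i < D)
     (\sum_(s : {ffun 'I_N -> 'I_M})
        (T i s)%:C * trace_prod rho (tensor (fun k => A k (s k)))) ^+ 2
  <= \sum_(s : {ffun 'I_N -> 'I_M})
        trace_prod rho (tensor (fun k => A k (s k) *m A k (s k))).
Proof.
have sets_gt0 : 0 < #|{set 'I_N}|%:R :> R[i].
  by rewrite ltr0n; apply/card_gt0P; exists set0.
rewrite -(ler_pM2l sets_gt0) !mulr_natl -!sumr_const -(sum_ordered_mul_gram hT).
apply: ler_sum => tau _; apply: ler_sum => i _.
exact: ppt_sqr_bound.
Qed.
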